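(* Let $\mathcal{A}=(T(\Sigma,X),\Rightarrow_\Pi)$ be an abstract reduction system closed under substitutions, and let $(u_1\Rightarrow_{w_1}v_1,\ u_2\Rightarrow_{w_2}v_2)$ be a recurrent pair in $\mathcal{A}$, with $c_1,c_2,x,y,s,t,n_1,n_2,n_3,n_4$ as in the definition of recurrent pair. Then for all $m,n\in\mathbb{N}$, $c_1[m,n+1]\Rightarrow_{w_1}c_1[m+n_1,n]$. Consequently, for all $m,n\in\mathbb{N}$ with $n\ge n_2$, $c_1[m,n]\Rightarrow_{w_1}^{\,n-n_2}c_1[m+(n-n_2)\times n_1,\ n_2]$.
   Context: Fix a signature $\Sigma$, a countably infinite set $X$ of variables disjoint from $\Sigma$, and two distinct fresh hole constants $\square,\square'\notin\Sigma\cup X$. Terms are elements of $T(\Sigma,X)$; substitutions $\theta$ (maps $X\to T(\Sigma,X)$ moving finitely many variables) act homomorphically; $\mathit{Var}$ denotes the variable set. An abstract reduction system $(A,\Rightarrow_\Pi)$ has $\Rightarrow_\Pi=\bigcup_{\pi\in\Pi}\Rightarrow_\pi$; for $w=\langle\pi_1,\dots,\pi_k\rangle\in\Pi^*$, $\Rightarrow_w=\Rightarrow_{\pi_1}\circ\cdots\circ\Rightarrow_{\pi_k}$ ($\Rightarrow_\epsilon$ the identity), and $\Rightarrow_w^k$ is the $k$-fold composition of $\Rightarrow_w$ ($\Rightarrow_w^0$ the identity). It is closed under substitutions if for all $s,t\in A$, $w\in\Pi^*$ and substitutions $\theta$, $s\Rightarrow_w t$ implies $s\theta\Rightarrow_w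 t\theta$. Let $c_1$ be a term over $\Sigma\cup\{\square,\square'\}$ and $X$ containing at least one occurrence of $\square$ and of $\square'$, and $c_1[t,t']$ the result of replacing all $\square$ by $t$ and all $\square'$ by $t'$. Let $c_2$ be a term over $\Sigma\cup\{\square\}$ and $X$ containing at least one $\square$ (and no $\square'$), $c_2[t]$ the result of replacing all $\square$ by $t$, $c_2^0[t]=t$, $c_2^{k+1}[t]=c_2[c_2^k[t]]$. A recurrent pair in $\mathcal{A}$ is a pair of chains $u_1\Rightarrow_{w_1}v_1$ and $u_2\Rightarrow_{w_2}v_2$ ($w_1,w_2\in\Pi^*$) such that: $u_1=c_1[x,c_2[y]]$, $v_1=c_1[c_2^{n_1}[x],y]$, $u_2=c_1[x,c_2^{n_2}[s]]$, $v_2=c_1[c_2^{n_3}[t],c_2^{n_4}[x]]$ for variables $x\neq y$ with $\{x,y\}\cap\mathit{Var}(c_1)=\emptyset$, a term $s$, naturals $n_1,n_2,n_3,n_4$; $\mathit{Var}(c_2)=\mathit{Var}(s)=\emptyset$; $t\in\{x,s\}$; and $n_4\ge n_2$. For $m,n\in\mathbb{N}$, $c_1[m,n]$ denotes the term $c_1[c_2^m[s],c_2^n[s]]$. *)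

From mathcomp Require Import all_boot.
Set Implicit Arguments. Unset Strict Implicit. Unset Printing Implicit Defensive.

(* First-order terms over a ranked signature F (arity ar), variables = nat
   (a countably infinite set, disjoint from F by construction). *)
Inductive term (F : Type) : Type :=
| Var : nat -> term F
| Fun : F -> seq (term F) -> term F.
Arguments Var {F} _.

Section Terms.
Variable F : Type.
Variable ar : F -> nat.

Fixpoint wf (t : term F) : bool :=
  match t with
  | Var _ => true
  | Fun f ts => (size ts == ar f) && all wf ts
  end.

Fixpoint vars (t : term F) : seq nat :=
  match t with
  | Var v => [:: v]
  | Fun _ ts => flatten (map vars ts)
  end.

Fixpoint subst (theta : nat -> term F) (t : term F) : term F :=
  match t with
  | Var v => theta v
  | Fun f ts => Fun f (map (subst theta) ts)
  end.

Definition is_subst (theta : nat -> term F) : Prop :=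
  (forall v, wf (theta v)) /\ exists N, forall v, N <= v -> theta v = Var v.
End Terms.

(* Extended signature Sigma u {hole, hole'} ; holes are constants. *)
Inductive hsym (F : Type) : Type := H1 | H2 | Sym of F.
Arguments H1 {F}. Arguments H2 {F}.

Definition har (F : Type) (ar : F -> nat) (g : hsym F) : nat :=
  match g with Sym f => ar f | _ => 0 end.

Section Holes.
Variable F : Type.

Fixpoint has_h1 (c : term (hsym F)) : bool :=
  match c with
  | Var _ => false
  | Fun H1 _ => true
  | Fun _ ts => has has_h1 ts
  end.

Fixpoint has_h2 (c : term (hsym F)) : bool :=
  match c with
  | Var _ => false
  | Fun H2 _ => true
  | Fun _ ts => has has_h2 ts
  end.

Fixpoint fill (c : term (hsym F)) (t t' : term F) : term F :=
  match c with
  | Var v => Var v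
  | Fun H1 _ => t
  | Fun H2 _ => t'
  | Fun (Sym f) ts => Fun f (map (fun c' => fill c' t t') ts)
  end.

(* c2[t] (used for c2 without hole') and its iterates c2^k[t] *)
Definition fill1 (c : term (hsym F)) (t : term F) : term F := fill c t t.
Definition cpow (c : term (hsym F)) (k : nat) (t : term F) : term F :=
  iter k (fill1 c) t.
End Holes.

Section ARS.
Variables (F Pi : Type) (step : Pi -> term F -> term F -> Prop).

(* =>_<p1,...,pk> = =>_p1 o ... o =>_pk : first a p1 step, then p2, ... *)
Fixpoint redw (w : seq Pi) (s t : term F) : Prop :=
  match w with
  | [::] => s = t
  | p :: w' => exists r, step p s r /\ redw w' r t
  end.

Fixpoint redw_pow (w : seq Pi) (k : nat) (s t : term F) : Prop :=
  match k with
  | 0 => s = t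
  | k'.+1 => exists r, redw w s r /\ redw_pow w k' r t
  end.
End ARS.

Definition closed_under_subst (F Pi : Type) (ar : F -> nat)
  (step : Pi -> term F -> term F -> Prop) : Prop :=
  forall (s t : term F) (w : seq Pi) (theta : nat -> term F),
    wf ar s -> wf ar t -> is_subst ar theta ->
    redw step w s t -> redw step w (subst theta s) (subst theta t).

Definition recurrent_pair (F Pi : Type) (ar : F -> nat)
  (step : Pi -> term F -> term F -> Prop) (w1 w2 : seq Pi)
  (c1 c2 : term (hsym F)) (x y : nat) (s t : term F)
  (n1 n2 n3 n4 : nat) : Prop :=
  (wf (har ar) c1 /\ has_h1 c1 /\ has_h2 c1) /\
  (wf (har ar) c2 /\ has_h1 c2 /\ ~~ has_h2 c2) /\ wf ar s /\
  (x <> y /\ x \notin vars c1 /\ y \notin vars c1) /\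
  (vars c2 = [::] /\ vars s = [::]) /\ (t = Var x \/ t = s) /\ n2 <= n4 /\
  redw step w1 (fill c1 (Var x) (fill1 c2 (Var y)))
               (fill c1 (cpow c2 n1 (Var x)) (Var y)) /\
  redw step w2 (fill c1 (Var x) (cpow c2 n2 s))
               (fill c1 (cpow c2 n3 t) (cpow c2 n4 (Var x))).

Definition c1mn (F : Type) (c1 c2 : term (hsym F)) (s : term F) (m n : nat) :=
  fill c1 (cpow c2 m s) (cpow c2 n s).

From mathcomp Require Import all_boot.
From Stdlib Require List.

Set Implicit Arguments.
Unset Strict Implicit.

(* Instantiating [x] by [c2^m[s]] and [y] by [c2^n[s]] in the first chain of the
   pair gives [c1[m, n+1] =>_w1 c1[m+n1, n]]: the ground terms [c2] and [s] are
   unaffected by the substitution, and neither is [c1] since [x, y] do not occur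
   in it.  Iterating this step [n - n2] times gives the second claim. *)

Fixpoint term_nested_ind (F : Type) (P : term F -> Prop)
  (hvar : forall v, P (Var v))
  (hfun : forall f ts, List.Forall P ts -> P (Fun f ts))
  (t : term F) : P t :=
  match t with
  | Var v => hvar v
  | Fun f ts => hfun f ts
      ((fix all_ind (ts : seq (term F)) : List.Forall P ts :=
          match ts return List.Forall P ts with
          | [::] => List.Forall_nil P
          | t' :: ts' =>
              List.Forall_cons t' (@term_nested_ind F P hvar hfun t') (all_ind ts')
          end) ts)
  end.

Section Contexts.
Variable F : Type.
Implicit Types (c : term (hsym F)) (a b : term F) (th : nat -> term F).

Lemma wf_fill (ar : F -> nat) c a b :
  wf (har ar) c -> wf ar a -> wf ar b -> wf ar (fill c a b).
Proof.
move=> + wfa wfb; elim/term_nested_ind: c => [v|[| |f] ts IH] //=.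
move=> /andP[/eqP size_ts wf_ts]; rewrite size_map size_ts eqxx /=.
elim: ts IH wf_ts {size_ts} => [|t ts IHts] //= /List.Forall_cons_iff[IHt IH].
by case/andP=> wft wfts; rewrite IHt // IHts.
Qed.

Lemma wf_cpow (ar : F -> nat) c k a :
  wf (har ar) c -> wf ar a -> wf ar (cpow c k a).
Proof. by move=> wfc wfa; elim: k => [|k IH] //=; apply: wf_fill. Qed.

Lemma subst_fill th c a b :
  (forall v, v \in vars c -> th v = Var v) ->
  subst th (fill c a b) = fill c (subst th a) (subst th b).
Proof.
elim/term_nested_ind: c => [v|[| |f] ts IH] //= th_id.
  by rewrite th_id ?mem_seq1.
congr Fun; elim: ts IH th_id => [|t ts IHts] //= /List.Forall_cons_iff[IHt IH] th_id.
rewrite IHt => [|v vt]; last by rewrite th_id // mem_cat vt.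
by rewrite IHts // => v vts; rewrite th_id // mem_cat vts orbT.
Qed.

Lemma subst_cpow th c k a :
  vars c = [::] -> subst th (cpow c k a) = cpow c k (subst th a).
Proof.
move=> ground_c; elim: k => [|k IH] //=.
by rewrite /fill1 subst_fill ?IH // ground_c.
Qed.

Lemma cpowD c m n a : cpow c n (cpow c m a) = cpow c (m + n) a.
Proof. by rewrite /cpow addnC iterD. Qed.

End Contexts.

Definition subst_pair (F : Type) (x : nat) (a : term F) (y : nat) (b : term F)
    (v : nat) : term F :=
  if v == x then a else if v == y then b else Var v.

Lemma is_subst_pair (F : Type) (ar : F -> nat) (x : nat) (a : term F)
    (y : nat) (b : term F) :
  wf ar a -> wf ar b -> is_subst ar (subst_pair x a y b).
Proof.
rewrite /subst_pair => wfa wfb; split=> [v|].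
  by case: eqP => // _; case: eqP.
exists (maxn x y).+1 => v; rewrite ltnNge leq_max negb_or => /andP[].
by case: eqP => [->|_]; rewrite ?leqnn // => _; case: eqP => [->|_]; rewrite ?leqnn.
Qed.

Lemma subst_pair_id (F : Type) (x : nat) (a : term F) (y : nat) (b : term F)
    (v : nat) :
  v != x -> v != y -> subst_pair x a y b v = Var v.
Proof. by rewrite /subst_pair => /negPf-> /negPf->. Qed.

Section RecurrentStep.
Variables (F Pi : Type) (ar : F -> nat) (step : Pi -> term F -> term F -> Prop).

Lemma redw_instance w c1 c2 n1 x y a b :
  closed_under_subst ar step ->
  wf (har ar) c1 -> wf (har ar) c2 -> vars c2 = [::] ->
  x <> y -> x \notin vars c1 -> y \notin vars c1 ->
  wf ar a -> wf ar b ->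
  redw step w (fill c1 (Var x) (fill1 c2 (Var y)))
              (fill c1 (cpow c2 n1 (Var x)) (Var y)) ->
  redw step w (fill c1 a (fill1 c2 b)) (fill c1 (cpow c2 n1 a) b).
Proof.
move=> closed wfc1 wfc2 ground_c2 neq_xy xc1 yc1 wfa wfb red.
have wf_lhs : wf ar (fill c1 (Var x) (fill1 c2 (Var y))).
  by apply: wf_fill => //; apply: wf_fill.
have wf_rhs : wf ar (fill c1 (cpow c2 n1 (Var x)) (Var y)).
  by apply: wf_fill => //; apply: wf_cpow.
have := closed _ _ _ _ wf_lhs wf_rhs (is_subst_pair x y wfa wfb) red.
have c1_fixed v : v \in vars c1 -> subst_pair x a y b v = Var v.
  by move=> vc1; apply: subst_pair_id; apply: contraTneq vc1 => ->.
rewrite !subst_fill // => [|v]; last by rewrite ground_c2.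
rewrite subst_cpow //= /subst_pair eqxx.
have /eqP/negPf-> : y <> x by move/esym.
by rewrite eqxx.
Qed.

Lemma redw_pow_shift w (g : nat -> nat -> term F) d :
  (forall m n, redw step w (g m n.+1) (g (m + d) n)) ->
  forall k m n, redw_pow step w k (g m (n + k)) (g (m + k * d) n).
Proof.
move=> red1; elim=> [|k IH] m n /=; first by rewrite !addn0.
exists (g (m + d) (n + k)); split; first by rewrite addnS.
by rewrite mulSn addnA.
Qed.

End RecurrentStep.

Theorem lemma10 (F Pi : Type) (ar : F -> nat)
  (step : Pi -> term F -> term F -> Prop) (w1 w2 : seq Pi)
  (c1 c2 : term (hsym F)) (x y : nat) (s t : term F)
  (n1 n2 n3 n4 : nat) :
  closed_under_subst ar step ->
  recurrent_pair ar step w1 w2 c1 c2 x y s t n1 n2 n3 n4 ->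
  (forall m n : nat,
     redw step w1 (c1mn c1 c2 s m n.+1) (c1mn c1 c2 s (m + n1) n)) /\
  (forall m n : nat, n2 <= n ->
     redw_pow step w1 (n - n2) (c1mn c1 c2 s m n)
                      (c1mn c1 c2 s (m + (n - n2) * n1) n2)).
Proof.
move=> closed [[wfc1 _] [[wfc2 _] [wfs [[neq_xy [xc1 yc1]] [[ground_c2 _] [_ [_ [red1 _]]]]]]]].
have wf_pow k : wf ar (cpow c2 k s) by apply: wf_cpow.
have shift m n : redw step w1 (c1mn c1 c2 s m n.+1) (c1mn c1 c2 s (m + n1) n).
  rewrite /c1mn -cpowD.
  exact: (redw_instance closed wfc1 wfc2 ground_c2 neq_xy xc1 yc1
                        (wf_pow m) (wf_pow n) red1).
split=> // m n le_n2n.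
rewrite -[in c1mn c1 c2 s m n](subnKC le_n2n).
exact: redw_pow_shift shift (n - n2) m n2.
Qed.
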